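(* For every integer $N>1$ there exists a non-disjoint $(2^N,N,2^{N-1},(N-1)2^{N-2})$-SEDF (in $\mathbb{Z}_{2^N}$); in particular, non-disjoint SEDFs exist with any number $N\ge 2$ of sets.
   Context: Groups are written additively. For subsets $A,B$ of a group $G$, $\Delta(A,B)$ denotes the multiset $\{a-b: a\in A, b\in B\}$, and $\lambda G$ denotes the multiset containing each element of $G$ exactly $\lambda$ times. For a group $G$ of order $v$ and $m>1$, a family of $k$-subsets $\{A_1,\dots,A_m\}$ of $G$ (not required to be disjoint) is a non-disjoint $(v,m,k,\lambda)$-SEDF if for each $1\le i\le m$ the multiset union $\bigcup_{j\neq i}\Delta(A_i,A_j)$ equals $\lambda G$. *)

From HB Require Import structures.
From mathcomp Require Import all_boot all_order all_algebra.
Set Implicit Arguments. Unset Strict Implicit. Unset Printing Implicit Defensive.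
Import GRing.Theory.
Local Open Scope ring_scope.

(* Multiplicity of g in the multiset Delta(A,B) = {a - b : a in A, b in B}. *)
Definition delta_mult (G : finZmodType) (A B : {set G}) (g : G) : nat :=
  #|[set p : G * G | [&& p.1 \in A, p.2 \in B & p.1 - p.2 == g]]|.

(* The sets need not be
   disjoint. *)
Definition nondisjoint_SEDF (G : finZmodType) (v m k lam : nat)
    (A : 'I_m -> {set G}) : Prop :=
  [/\ #|G| = v, (1 < m)%N, (forall i, #|A i| = k) &
      forall (i : 'I_m) (g : G),
        (\sum_(j < m | j != i) delta_mult (A i) (A j) g)%N = lam].
Arguments nondisjoint_SEDF {G} v m k lam A.

(* Take A_i to be the elements of Z_(2^N) whose i-th binary digit is 0. For
   i <> j, g = a - b with a in A_i, b in A_j exactly when bit j of b and bit i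
   of b + g both vanish. Adding 2^max(i,j) to b flips one of these two bits and
   leaves the other alone, because carries only move upwards; this halves the
   count twice, so every g has 2^(N-2) representations for each of the N - 1
   indices j <> i. *)

From mathcomp Require Import all_boot all_order all_algebra.
Import GRing.Theory.
From mathcomp Require Import zify.

Set Implicit Arguments.
Unset Strict Implicit.
Unset Printing Implicit Defensive.

Definition bitn (k n : nat) : bool := odd (n %/ 2 ^ k).

Lemma bitn_mod (N k n : nat) : (k < N)%N -> bitn k (n %% 2 ^ N) = bitn k n.
Proof.
move=> kN; rewrite /bitn {2}(divn_eq n (2 ^ N)).
rewrite -(subnK (ltnW kN)) expnD mulnA divnMDl ?expn_gt0 // oddD oddM oddX.
by rewrite subn_eq0 leqNgt kN andbF.
Qed.

Lemma bitn_addX (k n : nat) : bitn k (n + 2 ^ k) = ~~ bitn k n.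
Proof. by rewrite /bitn addnC -{1}(mul1n (2 ^ k)) divnMDl ?expn_gt0 // oddD. Qed.

Lemma bitn_addX_low (l k n : nat) : (l < k)%N -> bitn l (n + 2 ^ k) = bitn l n.
Proof.
move=> lk; rewrite /bitn -(subnK (ltnW lk)) expnD addnC divnMDl ?expn_gt0 //.
by rewrite oddD oddX subn_eq0 leqNgt lk.
Qed.

Local Open Scope ring_scope.

Lemma delta_multE (G : finZmodType) (A B : {set G}) (g : G) :
  delta_mult A B g = #|[set b in B | b + g \in A]|.
Proof.
have shift_inj : injective (fun b : G => (b + g, b)) by move=> b c [_].
rewrite /delta_mult -(card_imset _ shift_inj); apply: eq_card => -[a b]; rewrite !inE /=; apply/and3P/imsetP.
  move=> [aA bB /eqP <-]; exists b; last by rewrite addrC subrK.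
  by rewrite inE bB addrC subrK.
by move=> [b' + [-> ->]]; rewrite inE addrAC subrr add0r eqxx => /andP[-> ->].
Qed.

Lemma card_halved (G : finZmodType) (e : G) (P Q : pred G) :
  (forall x, P (x + e) = ~~ P x) -> (forall x, Q (x + e) = Q x) ->
  (#|[set x | P x && Q x]| * 2 = #|[set x | Q x]|)%N.
Proof.
move=> Pe Qe.
have shift : #|[set x | ~~ P x && Q x]| = #|[set x | P x && Q x]|.
  rewrite -(card_preimset [set x | P x && Q x] (addIr e)).
  by apply: eq_card => x; rewrite !inE Pe Qe.
rewrite -(cardsID [set x | P x] [set x | Q x]) muln2 -addnn; congr (_ + _)%N.
  by apply: eq_card => x; rewrite !inE andbC.
by rewrite -shift; apply: eq_card => x; rewrite !inE.
Qed.

Section BitsOfZp.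

Variable N : nat.
Hypothesis N_gt0 : (0 < N)%N.
Local Notation Z := 'Z_(2 ^ N).

Let pow2_gt1 : (1 < 2 ^ N)%N.
Proof. by rewrite -{1}(expn0 2) ltn_exp2l. Qed.

Lemma val_addZ (x y : Z) : x + y = ((x + y)%N %% 2 ^ N)%N :> nat.
Proof. by rewrite /= {3}Zp_cast. Qed.

Lemma val_pow2Z (k : nat) : (k < N)%N -> ((2 ^ k)%:R : Z) = (2 ^ k)%N :> nat.
Proof. by move=> kN; rewrite (val_Zp_nat pow2_gt1) modn_small ?ltn_exp2l. Qed.

Lemma card_Z : #|Z| = (2 ^ N)%N.
Proof. by rewrite card_ord Zp_cast. Qed.

Definition bit (k : nat) (x : Z) : bool := bitn k x.

Lemma bit_addX (k : nat) (x : Z) : (k < N)%N -> bit k (x + (2 ^ k)%:R) = ~~ bit k x.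
Proof. by move=> kN; rewrite /bit val_addZ val_pow2Z // bitn_mod // bitn_addX. Qed.

Lemma bit_addX_low (l k : nat) (x : Z) :
  (l < k)%N -> (k < N)%N -> bit l (x + (2 ^ k)%:R) = bit l x.
Proof.
move=> lk kN; rewrite /bit val_addZ val_pow2Z // bitn_mod ?bitn_addX_low //.
exact: ltn_trans kN.
Qed.

Lemma card_bit_clear (k : nat) (h : Z) :
  (k < N)%N -> #|[set x : Z | ~~ bit k (x + h)]| = (2 ^ N.-1)%N.
Proof.
move=> kN; have flip x : ~~ bit k (x + (2 ^ k)%:R + h) = ~~ ~~ bit k (x + h).
  by rewrite addrAC bit_addX.
have := @card_halved _ _ _ xpredT flip (fun=> erefl).
under eq_finset => x do rewrite andbT.
rewrite cardsT card_Z => halved; apply/eqP.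
by rewrite -(eqn_pmul2r (isT : (0 < 2)%N)) halved -expnSr prednK.
Qed.

Lemma card_two_bits_clear (k l : nat) (h1 h2 : Z) :
  k != l -> (k < N)%N -> (l < N)%N ->
  #|[set x : Z | ~~ bit k (x + h1) && ~~ bit l (x + h2)]| = (2 ^ (N - 2))%N.
Proof.
wlog lk : k l h1 h2 / (l < k)%N.
  move=> sym kl kN lN; case: (ltngtP l k) => [lk | lt_kl | eq_lk]; first exact: sym.
    under eq_finset => x do rewrite andbC.
    by apply: sym; rewrite // eq_sym.
  by rewrite eq_lk eqxx in kl.
move=> _ kN lN.
have flip x : ~~ bit k (x + (2 ^ k)%:R + h1) = ~~ ~~ bit k (x + h1).
  by rewrite addrAC bit_addX.
have keep x : ~~ bit l (x + (2 ^ k)%:R + h2) = ~~ bit l (x + h2).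
  by rewrite addrAC bit_addX_low.
have := card_halved flip keep; rewrite card_bit_clear // => halved; apply/eqP.
rewrite -(eqn_pmul2r (isT : (0 < 2)%N)) halved -expnSr.
by have -> : (N - 2).+1 = N.-1 by lia.
Qed.

End BitsOfZp.

Theorem corollary3p6 (N : nat) (hN : (1 < N)%N) :
  exists A : 'I_N -> {set 'Z_(2 ^ N)},
    nondisjoint_SEDF (2 ^ N) N (2 ^ N.-1) ((N - 1) * 2 ^ (N - 2)) A.
Proof.
have N_gt0 := ltnW hN.
exists (fun i : 'I_N => [set x : 'Z_(2 ^ N) | ~~ bit i x]); split => //.
- exact: card_Z.
- move=> i; rewrite -(card_bit_clear N_gt0 0 (ltn_ord i)).
  by apply: eq_card => x; rewrite !inE addr0.
move=> i g; rewrite (eq_bigr (fun=> 2 ^ (N - 2))%N) => [|j ji].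
  by rewrite sum_nat_const cardC1 card_ord subn1.
rewrite delta_multE -(card_two_bits_clear N_gt0 0 g ji (ltn_ord j) (ltn_ord i)).
by apply: eq_card => x; rewrite !inE addr0.
Qed.
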